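(* Let $G$ be a graph and $uv\in E(G)$. Then $d(G)\le d(G-uv)$, with equality if and only if $N_G[u]=N_G[v]$.
   Context: All graphs are finite, simple and undirected. A subset $D\subseteq V(G)$ is a dissociation set of $G$ if the induced subgraph $G[D]$ has maximum degree at most $1$; the empty set is a dissociation set. $d(G)$ denotes the total number of dissociation sets of $G$, including the empty set. $G-uv$ is the graph obtained from $G$ by deleting the edge $uv$ while keeping all vertices. $N_G[x]$ denotes the closed neighborhood of $x$ in $G$. *)

From mathcomp Require Import all_boot.
Set Implicit Arguments. Unset Strict Implicit. Unset Printing Implicit Defensive.

Definition simple_graph (T : finType) (e : rel T) : Prop :=
  symmetric e /\ irreflexive e.

Definition dissociation (T : finType) (e : rel T) (D : {set T}) : bool :=
  [forall x in D, #|[set y in D | e x y]| <= 1].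

Definition dcount (T : finType) (e : rel T) : nat :=
  #|[set D : {set T} | dissociation e D]|.

Definition del_edge (T : finType) (e : rel T) (u v : T) : rel T :=
  fun x y => e x y && ~~ (((x == u) && (y == v)) || ((x == v) && (y == u))).

Definition cnbhd (T : finType) (e : rel T) (x : T) : {set T} :=
  [set y | (y == x) || e x y].

From mathcomp Require Import all_boot.

Set Implicit Arguments.
Unset Strict Implicit.
Unset Printing Implicit Defensive.

(* Deleting uv can only create dissociation sets, so d(G) <= d(G - uv), with
   equality iff every dissociation set of G - uv is one of G.  A vertex
   w in N(u) \ N[v] spoils this: {u, v, w} spans only the edge uw in G - uv,
   but u has the two neighbours v and w in G.  Conversely, if N[u] = N[v] and
   u, v lie in a dissociation set D of G - uv, any further neighbour of u in D
   would also be adjacent to v, so u and v are isolated in (G - uv)[D] and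
   adding the edge uv back keeps D a dissociation set. *)

Section Dissociation.

Variable T : finType.

Lemma dissociationP (e : rel T) (D : {set T}) :
  reflect (forall x y1 y2, x \in D -> y1 \in D -> y2 \in D ->
             e x y1 -> e x y2 -> y1 = y2)
          (dissociation e D).
Proof.
apply: (iffP forall_inP) => [De x y1 y2 xD y1D y2D e1 e2 | De x xD].
  by have /card_le1_eqP := De x xD; apply; rewrite inE ?y1D ?y2D ?e1 ?e2.
apply/card_le1_eqP => y1 y2; rewrite !inE => /andP[y1D e1] /andP[y2D e2].
exact: (De x).
Qed.

Lemma dissociation_subrel (e1 e2 : rel T) (D : {set T}) :
  subrel e2 e1 -> dissociation e1 D -> dissociation e2 D.
Proof.
move=> e21 /dissociationP De1; apply/dissociationP => x y1 y2 xD y1D y2D xy1 xy2.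
exact: (De1 x y1 y2 xD y1D y2D (e21 _ _ xy1) (e21 _ _ xy2)).
Qed.

Lemma eq_in_dissociation (e1 e2 : rel T) (D : {set T}) :
  {in D &, e1 =2 e2} -> dissociation e1 D = dissociation e2 D.
Proof.
move=> e12; apply/dissociationP/dissociationP => De x y1 y2 xD y1D y2D.
  by rewrite -!e12 //; apply: De.
by rewrite !e12 //; apply: De.
Qed.

Lemma dissociation_one_edge (e : rel T) (D : {set T}) (a b : T) :
  (forall x y, x \in D -> y \in D -> e x y ->
     (x == a) && (y == b) || (x == b) && (y == a)) ->
  dissociation e D.
Proof.
move=> De; apply/dissociationP => x y1 y2 xD y1D y2D e1 e2.
case/orP: (De x y1 xD y1D e1) => /andP[/eqP xa1 /eqP->];
  by case/orP: (De x y2 xD y2D e2) => /andP[/eqP xa2 /eqP->]; congruence.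
Qed.

Lemma dcount_subrel (e1 e2 : rel T) :
  subrel e2 e1 ->
  dcount e1 <= dcount e2 ?= iff
    ([set D | dissociation e2 D] \subset [set D | dissociation e1 D]).
Proof.
move=> e21; apply: subset_leqif_card; apply/subsetP => D.
by rewrite !inE; apply: dissociation_subrel.
Qed.

End Dissociation.

Section DeleteEdge.

Variables (T : finType) (e : rel T).
Hypotheses (sym_e : symmetric e) (irr_e : irreflexive e).

Lemma del_edge_subrel u v : subrel (del_edge e u v) e.
Proof. by move=> x y /andP[]. Qed.

Lemma del_edgeC u v : del_edge e u v =2 del_edge e v u.
Proof. by move=> x y; rewrite /del_edge orbC. Qed.

Lemma del_edge_notin u v (D : {set T}) :
  u \notin D -> {in D &, del_edge e u v =2 e}.
Proof.
move=> uD x y xD yD; have xu : x != u by apply: contraNneq uD => <-.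
have yu : y != u by apply: contraNneq uD => <-.
by rewrite /del_edge (negbTE xu) (negbTE yu) !andbF andbT.
Qed.

Lemma del_edgeE u v x y : x != u -> x != v -> del_edge e u v x y = e x y.
Proof. by rewrite /del_edge => /negbTE-> /negbTE->; rewrite andbT. Qed.

Lemma cnbhd_sub_del_edge u v :
  e u v ->
  (forall D, dissociation (del_edge e u v) D -> dissociation e D) ->
  cnbhd e u \subset cnbhd e v.
Proof.
move=> euv lift; apply/subsetP => w; rewrite !inE.
case/orP=> [/eqP-> | euw]; first by rewrite sym_e euv orbT.
apply: contraT => /norP[wv nevw].
have uv : u != v by apply: contraTneq euv => ->; rewrite irr_e.
have wu : w != u by apply: contraTneq euw => ->; rewrite irr_e.
have /dissociationP De : dissociation e [set u; v; w].
  apply: lift; apply: (@dissociation_one_edge _ _ _ u w) => x y.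
  rewrite !inE /del_edge.
  by move=> /orP[/orP[]|]/eqP-> /orP[/orP[]|]/eqP->;
    rewrite ?irr_e ?euw ?(sym_e w) ?(negbTE nevw) ?eqxx ?(eq_sym v) ?(eq_sym w)
            ?(negbTE uv) ?(negbTE wu) ?(negbTE wv) ?andbF ?andbT ?orbF ?orbT.
by move: wv; rewrite (De u v w) ?inE ?eqxx ?orbT.
Qed.

Lemma twin_nbr_del_edge u v (D : {set T}) :
  u != v -> cnbhd e u = cnbhd e v -> dissociation (del_edge e u v) D ->
  u \in D -> v \in D -> forall y, y \in D -> e u y -> y = v.
Proof.
move=> uv Nuv /dissociationP De uD vD y yD euy; apply/eqP/contraT => yv.
have yu : y != u by apply: contraTneq euy => ->; rewrite irr_e.
have evy : e v y.
  by move/setP/(_ y): Nuv; rewrite !inE euy (negbTE yv) orbT.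
suff : u = v by move/eqP; rewrite (negbTE uv).
by apply: (De y) => //; rewrite del_edgeE // sym_e.
Qed.

Lemma dissociation_twin_del_edge u v (D : {set T}) :
  u != v -> cnbhd e u = cnbhd e v ->
  dissociation (del_edge e u v) D -> dissociation e D.
Proof.
move=> uv Nuv Duv.
have [uD | uD] := boolP (u \in D); last first.
  by rewrite -(eq_in_dissociation (del_edge_notin v uD)).
have [vD | vD] := boolP (v \in D); last first.
  rewrite -(eq_in_dissociation (del_edge_notin u vD)).
  by rewrite (eq_in_dissociation (in2W (del_edgeC u v))) in Duv.
have Dvu : dissociation (del_edge e v u) D.
  by rewrite (eq_in_dissociation (in2W (del_edgeC v u))).
have /dissociationP De := Duv.
apply/dissociationP => x y1 y2 xD y1D y2D xy1 xy2.
have [xu | xu] := eqVneq x u.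
  rewrite xu in xy1 xy2.
  by rewrite (twin_nbr_del_edge uv Nuv Duv uD vD y1D xy1)
             (twin_nbr_del_edge uv Nuv Duv uD vD y2D xy2).
have [xv | xv] := eqVneq x v.
  rewrite xv in xy1 xy2; rewrite eq_sym in uv.
  by rewrite (twin_nbr_del_edge uv (esym Nuv) Dvu vD uD y1D xy1)
             (twin_nbr_del_edge uv (esym Nuv) Dvu vD uD y2D xy2).
by apply: (De x); rewrite ?del_edgeE.
Qed.

End DeleteEdge.

Theorem lemma2p5 (T : finType) (e : rel T) (u v : T) :
  simple_graph e -> e u v ->
  dcount e <= dcount (del_edge e u v) /\
  (dcount e = dcount (del_edge e u v) <-> cnbhd e u = cnbhd e v).
Proof.
move=> [sym_e irr_e] euv.
have uv : u != v by apply: contraTneq euv => ->; rewrite irr_e.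
have [dle deq] := dcount_subrel (@del_edge_subrel _ e u v).
split=> //; apply: (iff_trans (rwP eqP)); rewrite deq; split=> [/subsetP lift | Nuv].
  have lift_uv D : dissociation (del_edge e u v) D -> dissociation e D.
    by move=> DD; have := lift D; rewrite !inE; apply.
  have lift_vu D : dissociation (del_edge e v u) D -> dissociation e D.
    by rewrite (eq_in_dissociation (in2W (del_edgeC e v u))); apply: lift_uv.
  apply/eqP; rewrite eqEsubset (cnbhd_sub_del_edge sym_e irr_e euv lift_uv).
  by rewrite (cnbhd_sub_del_edge sym_e irr_e _ lift_vu) // sym_e.
apply/subsetP => D; rewrite !inE.
exact: dissociation_twin_del_edge.
Qed.
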